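(* Let $C\in\mathbb{R}^{n\times n}$ be symmetric and $\rho>0$. A pair $(\tilde\sigma,\sigma)\in\mathbb{R}^{n\times r}\times\mathbb{R}^{n\times r}$ is a critical point of $G_\rho$ if and only if $\sigma=\tilde\sigma$ and $\tilde\sigma$ is a critical point of the problem $\min\{\langle C,\sigma\sigma^\top\rangle:\sigma\in\mathcal{M}\}$; in this sense the two problems have the same critical points.
   Context: $\langle A,B\rangle=\mathrm{Tr}(A^\top B)$, $\|\cdot\|_F$ Frobenius norm. For $\sigma\in\mathbb{R}^{n\times r}$, $\sigma_i$ is its $i$-th row; $\mathcal{M}=\{\sigma:\|\sigma_i\|=1\ \forall i\}$, $\mathcal{I}_S$ the indicator function of $S$. $G_\rho(\tilde\sigma,\sigma)=\langle C,\tilde\sigma\tilde\sigma^\top\rangle+\frac\rho2\|\tilde\sigma-\sigma\|_F^2+\sum_{i=1}^n\mathcal{I}_{\{\|u\|=1\}}(\tilde\sigma_i)$. A critical point of a function is a point where $0$ belongs to its limiting subdifferential; a critical point of the constrained problem is $\tilde\sigma\in\mathcal{M}$ with $0\in2C\tilde\sigma+\partial\big(\sum_i\mathcal{I}_{\{\|u\|=1\}}(\tilde\sigma_i)\big)$. *)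

From HB Require Import structures.
From mathcomp Require Import all_boot all_order all_algebra.
From mathcomp Require Import reals constructive_ereal.
Set Implicit Arguments. Unset Strict Implicit. Unset Printing Implicit Defensive.
Import Order.TTheory GRing.Theory Num.Theory.
Local Open Scope ring_scope.

Definition enorm (R : realType) (E : zmodType) (ip : E -> E -> R) (x : E) : R :=
  Num.sqrt (ip x x).

Definition ecvg (R : realType) (E : zmodType) (ip : E -> E -> R)
    (u : nat -> E) (x : E) : Prop :=
  forall eps : R, 0 < eps -> exists N : nat, forall k : nat, (N <= k)%N ->
    enorm ip (u k - x) < eps.

(* Frechet (regular) subgradient: f(x) finite and
   liminf_{y -> x, y <> x} (f y - f x - <v, y - x>) / ||y - x|| >= 0,
   written in epsilon-delta form. *)
Definition frechet_subgrad (R : realType) (E : zmodType) (ip : E -> E -> R)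
    (f : E -> \bar R) (x v : E) : Prop :=
  f x \is a fin_num /\
  forall eps : R, 0 < eps -> exists2 delta : R, 0 < delta &
    forall y : E, enorm ip (y - x) < delta ->
      ((fine (f x) + ip v (y - x) - eps * enorm ip (y - x))%:E <= f y)%E.

Definition limiting_subgrad (R : realType) (E : zmodType) (ip : E -> E -> R)
    (f : E -> \bar R) (x v : E) : Prop :=
  f x \is a fin_num /\
  exists (xk vk : nat -> E),
    [/\ ecvg ip xk x,
        (forall eps : R, 0 < eps -> exists N : nat, forall k : nat, (N <= k)%N ->
           `|fine (f (xk k)) - fine (f x)| < eps),
        (forall k, frechet_subgrad ip f (xk k) (vk k)) &
        ecvg ip vk v].

Definition critical (R : realType) (E : zmodType) (ip : E -> E -> R)
    (f : E -> \bar R) (x : E) : Prop :=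
  limiting_subgrad ip f x 0.

Definition mip (R : realType) (m k : nat) (A B : 'M[R]_(m, k)) : R :=
  \tr (A^T *m B).

Definition frob (R : realType) (m k : nat) (A : 'M[R]_(m, k)) : R :=
  Num.sqrt (mip A A).

Definition pip (R : realType) (n r : nat)
    (p q : 'M[R]_(n, r) * 'M[R]_(n, r)) : R :=
  mip p.1 q.1 + mip p.2 q.2.

Definition indic (R : realType) (T : Type) (S : T -> bool) (x : T) : \bar R :=
  if S x then 0%E else +oo%E.

Definition unit_sphere (R : realType) (r : nat) (u : 'rV[R]_r) : bool :=
  frob u == 1.

Definition row_indic (R : realType) (n r : nat) (s : 'M[R]_(n, r)) : \bar R :=
  (\sum_(i < n) @indic R _ (@unit_sphere R r) (row i s))%E.

Definition in_M (R : realType) (n r : nat) (s : 'M[R]_(n, r)) : Prop :=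
  forall i : 'I_n, frob (row i s) = 1.

Definition G (R : realType) (n r : nat) (C : 'M[R]_n) (rho : R)
    (p : 'M[R]_(n, r) * 'M[R]_(n, r)) : \bar R :=
  ((mip C (p.1 *m p.1^T))%:E + (rho / 2 * frob (p.1 - p.2) ^+ 2)%:E
     + row_indic p.1)%E.

(* critical point of min{<C, s s^T> : s in M}:
   s in M and 0 in 2 C s + d(sum_i I(s_i))(s) *)
Definition constrained_critical (R : realType) (n r : nat) (C : 'M[R]_n)
    (s : 'M[R]_(n, r)) : Prop :=
  in_M s /\
  exists w : 'M[R]_(n, r),
    limiting_subgrad (@mip R n r) (@row_indic R n r) s w /\
    2%:R *: (C *m s) + w = 0.

(* G_rho splits as the indicator of M in the first variable plus the quadratic
   h(st, s) = <C, st st^T> + rho/2 |st - s|^2, whose gradient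
   (2 C st + rho (st - s), rho (s - st)) is linear, hence Lipschitz, with an
   exact second-order expansion.  Adding such a smooth function shifts Frechet
   and limiting subgradients by its gradient, and the subgradients of a
   function of the first factor alone are those of that function paired with
   0.  Hence 0 is a limiting subgradient of G_rho at (st, s) iff
   rho (s - st) = 0 and -2 C st is a limiting subgradient of the indicator of
   M at st, i.e. iff s = st and st is critical for the constrained problem. *)

From HB Require Import structures.
From mathcomp Require Import all_boot all_order all_algebra.
From mathcomp Require Import reals constructive_ereal classical_sets topology normedtype.
From mathcomp Require Import ring lra.
Set Implicit Arguments. Unset Strict Implicit. Unset Printing Implicit Defensive.
Import Order.TTheory GRing.Theory Num.Theory.
Import numFieldNormedType.Exports.
Local Open Scope classical_set_scope.
Local Open Scope ring_scope.

Section RealSequences.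
Variable R : realType.
Implicit Types u v : nat -> R.

Lemma cvg_epsNP u (l : R) :
  (forall eps, 0 < eps -> exists N, forall k, (N <= k)%N -> `|u k - l| < eps) <->
  u @ \oo --> l.
Proof.
rewrite cvgrPdist_lt; split=> h e /h.
  by case=> N hN; exists N => // k /= /hN; rewrite distrC.
by case=> N _ hN; exists N => k /hN /=; rewrite distrC.
Qed.

Lemma dominated_cvg0 u v : (forall k, `|u k| <= v k) -> v @ \oo --> 0 -> u @ \oo --> 0.
Proof.
move=> huv v0; have Nv0 : (fun k => - v k) @ \oo --> 0 by rewrite -oppr0; exact: cvgN.
apply: (squeeze_cvgr _ Nv0 v0).
near=> k; rewrite -ler_norml; exact: huv.
Unshelve. all: by end_near.
Qed.

End RealSequences.

(** * Inner product spaces *)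

Record inner_product (R : realType) (E : lmodType R) (ip : E -> E -> R) : Prop := {
  ipDl : forall x y z, ip (x + y) z = ip x z + ip y z;
  ipZl : forall a x y, ip (a *: x) y = a * ip x y;
  ipC : forall x y, ip x y = ip y x;
  ip_ge0 : forall x, 0 <= ip x x;
  ip_eq0 : forall x, ip x x = 0 -> x = 0 }.

Section InnerProductSpace.
Variables (R : realType) (E : lmodType R) (ip : E -> E -> R).
Hypothesis ipP : inner_product ip.
Implicit Types x y z : E.

Lemma ipDr x y z : ip x (y + z) = ip x y + ip x z.
Proof. by rewrite !(ipC ipP x) (ipDl ipP). Qed.

Lemma ipZr a x y : ip x (a *: y) = a * ip x y.
Proof. by rewrite !(ipC ipP x) (ipZl ipP). Qed.

Lemma ipNl x y : ip (- x) y = - ip x y.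
Proof. by rewrite -scaleN1r (ipZl ipP) mulN1r. Qed.

Lemma ipNr x y : ip x (- y) = - ip x y.
Proof. by rewrite -scaleN1r ipZr mulN1r. Qed.

Lemma ipBl x y z : ip (x - y) z = ip x z - ip y z.
Proof. by rewrite (ipDl ipP) ipNl. Qed.

Lemma ipBr x y z : ip x (y - z) = ip x y - ip x z.
Proof. by rewrite ipDr ipNr. Qed.

Lemma ip0l y : ip 0 y = 0.
Proof. by rewrite -(scale0r 0) (ipZl ipP) mul0r. Qed.

Lemma ip0r x : ip x 0 = 0.
Proof. by rewrite (ipC ipP) ip0l. Qed.

Lemma enorm_ge0 x : 0 <= enorm ip x.
Proof. exact: sqrtr_ge0. Qed.

Lemma enorm_sqr x : enorm ip x ^+ 2 = ip x x.
Proof. by rewrite sqr_sqrtr ?(ip_ge0 ipP). Qed.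

Lemma enorm_eq0 x : enorm ip x = 0 -> x = 0.
Proof. by move=> h; apply: (ip_eq0 ipP); rewrite -enorm_sqr h expr0n. Qed.

Lemma enormZ a x : enorm ip (a *: x) = `|a| * enorm ip x.
Proof. by rewrite /enorm (ipZl ipP) ipZr mulrA sqrtrM ?sqr_ge0 // sqrtr_sqr. Qed.

Lemma enormN x : enorm ip (- x) = enorm ip x.
Proof. by rewrite -scaleN1r enormZ normrN1 mul1r. Qed.

Lemma enormB x y : enorm ip (x - y) = enorm ip (y - x).
Proof. by rewrite -enormN opprB. Qed.

Lemma ip_sqr_le x y : ip x y ^+ 2 <= ip x x * ip y y.
Proof.
have [yy0 | yy_gt0] := eqVneq (ip y y) 0.
  by rewrite (ip_eq0 ipP yy0) ip0r expr0n /= ip0r mulr0.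
have : 0 <= ip (ip y y *: x - ip x y *: y) (ip y y *: x - ip x y *: y) := ip_ge0 ipP _.
rewrite !ipBl !ipBr !(ipZl ipP) !ipZr (ipC ipP y x) => h.
have {h} : 0 <= ip y y * (ip y y * ip x x - ip x y ^+ 2) by lra.
by rewrite pmulr_rge0 ?subr_ge0 1?mulrC // lt_def yy_gt0 ip_ge0.
Qed.

Lemma ip_norm_le x y : `|ip x y| <= enorm ip x * enorm ip y.
Proof.
rewrite -sqrtr_sqr /enorm -sqrtrM ?(ip_ge0 ipP) //.
by rewrite ler_sqrt ?ip_sqr_le // mulr_ge0 ?(ip_ge0 ipP).
Qed.

Lemma enormD x y : enorm ip (x + y) <= enorm ip x + enorm ip y.
Proof.
rewrite -(ler_pXn2r (_ : 0 < 2)%N) ?nnegrE ?addr_ge0 ?enorm_ge0 //.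
rewrite sqrrD !enorm_sqr (ipDl ipP) !ipDr (ipC ipP y x).
by have := ip_norm_le x y; rewrite ler_norml => /andP[_]; lra.
Qed.

Lemma ip_littleo_eq0 v :
  (forall eps, 0 < eps -> exists2 delta, 0 < delta &
     forall d, enorm ip d < delta -> ip v d <= eps * enorm ip d) -> v = 0.
Proof.
move=> hv; apply: enorm_eq0; apply/eqP; rewrite eq_le enorm_ge0 andbT leNgt.
apply/negP => v_gt0; have [delta delta_gt0 hdelta] := hv _ (divr_gt0 v_gt0 (ltr0Sn _ 1)).
pose t := delta / (2 * enorm ip v).
have t_gt0 : 0 < t by rewrite divr_gt0 ?mulr_gt0.
have td : t * enorm ip v = delta / 2 by rewrite /t; field; rewrite gt_eqF.
have := hdelta (t *: v); rewrite ipZr enormZ gtr0_norm // -enorm_sqr td.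
have -> : delta / 2 < delta by rewrite ltr_pdivrMr //; lra.
move=> /(_ isT); rewrite expr2; nra.
Qed.

Lemma ecvgP u x : ecvg ip u x <-> (fun k => enorm ip (u k - x)) @ \oo --> 0.
Proof.
rewrite -cvg_epsNP; split=> h e /h [N hN]; exists N => k /hN;
  by rewrite subr0 ger0_norm ?enorm_ge0.
Qed.

Lemma ecvg_le (E' : zmodType) (ip' : E' -> E' -> R) u (v : nat -> E') x (y : E') :
  (forall k, enorm ip (u k - x) <= enorm ip' (v k - y)) -> ecvg ip' v y -> ecvg ip u x.
Proof. by move=> huv hv e /hv [N hN]; exists N => k /hN; apply: le_lt_trans. Qed.

Lemma ecvg_cst_eq x y : ecvg ip (fun=> y) x -> y = x.
Proof.
move=> h; apply/eqP; rewrite -subr_eq0; apply/eqP/enorm_eq0/eqP.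
rewrite eq_le enorm_ge0 andbT leNgt; apply/negP => /h [N /(_ N (leqnn N))].
by rewrite ltxx.
Qed.

Lemma ecvgD u v x y : ecvg ip u x -> ecvg ip v y -> ecvg ip (u \+ v) (x + y).
Proof.
move=> /ecvgP hu /ecvgP hv; apply/ecvgP.
apply: (@dominated_cvg0 _ _ (fun k => enorm ip (u k - x) + enorm ip (v k - y))).
  by move=> k; rewrite ger0_norm ?enorm_ge0 //= opprD addrACA enormD.
by rewrite -[0]addr0; apply: cvgD.
Qed.

(** * Adding a function with Lipschitz gradient *)

Definition quadratic_taylor (g : E -> R) (dg : E -> E) (L : R) :=
  forall x d, `|g (x + d) - g x - ip (dg x) d| <= L * enorm ip d ^+ 2.

Definition lipschitz_map (h : E -> E) (K : R) :=
  forall x y, enorm ip (h x - h y) <= K * enorm ip (x - y).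

Lemma quadratic_taylorN g dg L :
  quadratic_taylor g dg L -> quadratic_taylor (fun y => - g y) (fun y => - dg y) L.
Proof.
move=> hg x d; rewrite ipNl -normrN.
have -> : - (- g (x + d) - - g x - - ip (dg x) d) = g (x + d) - g x - ip (dg x) d by ring.
exact: hg.
Qed.

Lemma lipschitz_mapN h K : lipschitz_map h K -> lipschitz_map (fun y => - h y) K.
Proof. by move=> hh x y; rewrite -opprD enormN. Qed.

Lemma lipschitz_map_ecvg h K u x :
  lipschitz_map h K -> ecvg ip u x -> ecvg ip (fun k => h (u k)) (h x).
Proof.
move=> hh /ecvgP ux; apply/ecvgP.
apply: (@dominated_cvg0 _ _ (fun k => K * enorm ip (u k - x))).
  by move=> k; rewrite ger0_norm ?enorm_ge0.
rewrite -(mulr0 K); apply: cvgM => //; exact: cvg_cst.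
Qed.

Lemma quadratic_taylor_cvg g dg L u x :
  quadratic_taylor g dg L -> ecvg ip u x -> (fun k => g (u k)) @ \oo --> g x.
Proof.
move=> hg /ecvgP ux; apply/subr_cvg0.
apply: (@dominated_cvg0 _ _ (fun k => enorm ip (dg x) * enorm ip (u k - x)
                              + L * (enorm ip (u k - x) * enorm ip (u k - x)))).
  move=> k; have := hg x (u k - x); rewrite subrKC -expr2.
  have := ip_norm_le (dg x) (u k - x).
  move: (g (u k) - g x) (ip (dg x) (u k - x)) => a b; rewrite !ler_norml; lra.
rewrite [X in _ --> X](_ : 0 = enorm ip (dg x) * 0 + L * (0 * 0)); last first.
  by rewrite !mulr0 addr0.
by apply: cvgD; apply: cvgM => //; [exact: cvg_cst | exact: cvg_cst | apply: cvgM].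
Qed.

Lemma frechet_subgradD (f F : E -> \bar R) g dg L x v :
  quadratic_taylor g dg L -> (forall y, F y = (f y + (g y)%:E)%E) ->
  frechet_subgrad ip f x v -> frechet_subgrad ip F x (v + dg x).
Proof.
move=> hg hF [fx_fin hf]; split; first by rewrite hF fin_numD fx_fin.
move=> eps eps_gt0.
have [delta delta_gt0 hdelta] := hf (eps / 2) (divr_gt0 eps_gt0 (ltr0Sn _ 1)).
have L1_gt0 : 0 < `|L| + 1 by rewrite ltr_wpDl.
have c_gt0 : 0 < eps / (2 * (`|L| + 1)) by rewrite divr_gt0 ?mulr_gt0.
(* On this ball the Taylor remainder of [g] is at most [eps / 2 * |y - x|]. *)
exists (Num.min delta (eps / (2 * (`|L| + 1)))); first by rewrite lt_min delta_gt0.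
move=> y; rewrite lt_min => /andP[y_delta y_c].
rewrite hF fineD //= hF; apply: le_trans (leeD2r (g y)%:E (hdelta y y_delta)).
rewrite -EFinD lee_fin.
have := hg x (y - x); rewrite subrKC ler_norml => /andP[taylor _].
move: y_c; rewrite ltr_pdivlMr ?mulr_gt0 // => y_c.
have := enorm_ge0 (y - x); have := ler_norm L.
move: (enorm ip (y - x)) y_c taylor => e; rewrite (ipDl ipP); nra.
Qed.

Lemma limiting_subgradD (f F : E -> \bar R) g dg L K x v :
  quadratic_taylor g dg L -> lipschitz_map dg K ->
  (forall y, F y = (f y + (g y)%:E)%E) ->
  limiting_subgrad ip f x v -> limiting_subgrad ip F x (v + dg x).
Proof.
move=> hg hdg hF [fx_fin [xk [vk [xk_x fxk_fx hvk vk_v]]]].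
split; first by rewrite hF fin_numD fx_fin.
exists xk, (fun k => vk k + dg (xk k)); split => //.
- apply/cvg_epsNP; rewrite (eq_cvg _ _ (fun k => congr1 fine (hF (xk k)))) hF fineD //=.
  rewrite (eq_cvg _ _ (fun k => fineD (hvk k).1 (erefl : (g (xk k))%:E \is a fin_num))).
  by apply: cvgD; [apply/cvg_epsNP | exact: quadratic_taylor_cvg hg xk_x].
- by move=> k; apply: frechet_subgradD hg hF (hvk k).
- exact: ecvgD vk_v (lipschitz_map_ecvg hdg xk_x).
Qed.

Lemma limiting_subgradDE (f F : E -> \bar R) g dg L K x v :
  quadratic_taylor g dg L -> lipschitz_map dg K ->
  (forall y, F y = (f y + (g y)%:E)%E) ->
  limiting_subgrad ip F x v <-> limiting_subgrad ip f x (v - dg x).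
Proof.
move=> hg hdg hF; split=> [hFx | hfx]; last first.
  by rewrite -[v](subrK (dg x)); apply: limiting_subgradD hg hdg hF hfx.
apply: (limiting_subgradD (quadratic_taylorN hg) (lipschitz_mapN hdg) _ hFx) => y.
by rewrite hF EFinN addeK.
Qed.

End InnerProductSpace.

(** * Functions of the first factor of a product *)

Section ProductSpace.
Variables (R : realType) (E1 E2 : lmodType R).
Variables (ip1 : E1 -> E1 -> R) (ip2 : E2 -> E2 -> R).

Definition prod_ip (p q : E1 * E2) : R := ip1 p.1 q.1 + ip2 p.2 q.2.

Hypotheses (ip1P : inner_product ip1) (ip2P : inner_product ip2).

Lemma pair_subE (p q : E1 * E2) : p - q = (p.1 - q.1, p.2 - q.2).
Proof. by []. Qed.

Lemma inner_product_prod : inner_product prod_ip.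
Proof.
split=> [x y z | a x y | x y | x | [x1 x2]]; rewrite /prod_ip /=.
- by rewrite (ipDl ip1P) (ipDl ip2P) addrACA.
- by rewrite (ipZl ip1P) (ipZl ip2P) mulrDr.
- by rewrite (ipC ip1P) (ipC ip2P).
- by rewrite addr_ge0 ?(ip_ge0 ip1P) ?(ip_ge0 ip2P).
move/eqP; rewrite paddr_eq0 ?(ip_ge0 ip1P) ?(ip_ge0 ip2P) // => /andP[/eqP h1 /eqP h2].
by rewrite (ip_eq0 ip1P h1) (ip_eq0 ip2P h2).
Qed.

Lemma enorm_prod_fst p : enorm ip1 p.1 <= enorm prod_ip p.
Proof.
by rewrite ler_sqrt ?lerDl ?(ip_ge0 ip2P) // addr_ge0 ?(ip_ge0 ip1P) ?(ip_ge0 ip2P).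
Qed.

Lemma enorm_prod_snd p : enorm ip2 p.2 <= enorm prod_ip p.
Proof.
by rewrite ler_sqrt ?lerDr ?(ip_ge0 ip1P) // addr_ge0 ?(ip_ge0 ip1P) ?(ip_ge0 ip2P).
Qed.

Lemma enorm_prod_le p : enorm prod_ip p <= enorm ip1 p.1 + enorm ip2 p.2.
Proof.
rewrite -(ler_pXn2r (_ : 0 < 2)%N) ?nnegrE ?addr_ge0 ?enorm_ge0 //.
rewrite sqrrD (enorm_sqr inner_product_prod) !enorm_sqr // /prod_ip.
by rewrite lerD2r lerDl mulrn_wge0 ?mulr_ge0 ?enorm_ge0.
Qed.

Lemma enorm_prod_fst0 d : enorm prod_ip (d, 0) = enorm ip1 d.
Proof. by rewrite /enorm /prod_ip /= (ip0l ip2P) addr0. Qed.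

Lemma enorm_prod_snd0 d : enorm prod_ip (0, d) = enorm ip2 d.
Proof. by rewrite /enorm /prod_ip /= (ip0l ip1P) add0r. Qed.

Lemma frechet_subgrad_fst (phi : E1 -> \bar R) a b v1 v2 :
  frechet_subgrad prod_ip (fun p => phi p.1) (a, b) (v1, v2) <->
  v2 = 0 /\ frechet_subgrad ip1 phi a v1.
Proof.
split=> [[/= phia_fin h] | [-> [phia_fin h]]].
  split; last first.
    split=> // eps /h [delta delta_gt0 hdelta]; exists delta => // y hy.
    have := hdelta (y, b); rewrite pair_subE /= subrr enorm_prod_fst0 => /(_ hy).
    by rewrite /prod_ip /= (ip0r ip2P) addr0.
  (* Moving along the second factor does not change the value. *)
  apply: (ip_littleo_eq0 ip2P) => eps /h [delta delta_gt0 hdelta]; exists delta => // d hd.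
  have := hdelta (a, b + d); rewrite pair_subE /= subrr addrC addKr enorm_prod_snd0.
  move=> /(_ hd); rewrite /prod_ip /= (ip0r ip1P) add0r -{2}(fineK phia_fin) lee_fin.
  lra.
split=> // eps eps_gt0; have [delta delta_gt0 hdelta] := h eps eps_gt0.
exists delta => // -[y1 y2] hy.
apply: le_trans (hdelta y1 (le_lt_trans (enorm_prod_fst _) hy)).
have -> : prod_ip (v1, 0) ((y1, y2) - (a, b)) = ip1 v1 (y1 - a).
  by rewrite /prod_ip /= (ip0l ip2P) addr0.
rewrite lee_fin lerD2l lerN2 ler_wpM2l ?(ltW eps_gt0) //.
exact: (enorm_prod_fst ((y1, y2) - (a, b))).
Qed.

Lemma limiting_subgrad_fst (phi : E1 -> \bar R) a b v1 v2 :
  limiting_subgrad prod_ip (fun p => phi p.1) (a, b) (v1, v2) <->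
  v2 = 0 /\ limiting_subgrad ip1 phi a v1.
Proof.
split=> [[/= phia_fin [pk [wk [pk_ab fval hw wk_v]]]] |
         [-> [phia_fin [xk [vk [xk_a fval hv vk_v]]]]]].
  have hwk k : (wk k).2 = 0 /\ frechet_subgrad ip1 phi (pk k).1 (wk k).1.
    by move: (hw k); case: (pk k) (wk k) => ? ? [? ?] /frechet_subgrad_fst.
  split.
    apply: esym; apply: (ecvg_cst_eq ip2P); apply: (ecvg_le _ wk_v) => k.
    by rewrite -(hwk k).1; exact: (enorm_prod_snd (wk k - (v1, v2))).
  split=> //; exists (fun k => (pk k).1), (fun k => (wk k).1); split => //.
  - by apply: (ecvg_le _ pk_ab) => k; exact: (enorm_prod_fst (pk k - (a, b))).
  - by move=> k; exact: (hwk k).2.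
  - by apply: (ecvg_le _ wk_v) => k; exact: (enorm_prod_fst (wk k - (v1, v2))).
split=> //; exists (fun k => (xk k, b)), (fun k => (vk k, 0)); split => //.
- by apply: (ecvg_le _ xk_a) => k; rewrite pair_subE /= subrr enorm_prod_fst0.
- by move=> k; apply/frechet_subgrad_fst.
- by apply: (ecvg_le _ vk_v) => k; rewrite pair_subE /= subrr enorm_prod_fst0.
Qed.

End ProductSpace.

(** * The Frobenius inner product *)

Section Frobenius.
Variable R : realType.

Lemma mipE m n (A B : 'M[R]_(m, n)) : mip A B = \sum_(j < n) \sum_(i < m) A i j * B i j.
Proof. by apply: eq_bigr => j _; rewrite !mxE; apply: eq_bigr => i _; rewrite mxE. Qed.

Lemma entry_sqr_le_mip m n (A : 'M[R]_(m, n)) i j : A i j ^+ 2 <= mip A A.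
Proof.
rewrite mipE (bigD1 j) //= (bigD1 i) //= -addrA -expr2 lerDl.
by apply: addr_ge0; apply: sumr_ge0 => *; last apply: sumr_ge0 => *; rewrite -expr2 sqr_ge0.
Qed.

Lemma inner_product_mip m n : inner_product (@mip R m n).
Proof.
split=> [x y z | a x y | x y | x | x].
- by rewrite /mip linearD mulmxDl mxtraceD.
- by rewrite /mip linearZ -scalemxAl mxtraceZ.
- by rewrite /mip -mxtrace_tr trmx_mul trmxK.
- by rewrite mipE; apply: sumr_ge0 => j _; apply: sumr_ge0 => i _; rewrite -expr2 sqr_ge0.
move=> x0; apply/matrixP => i j; rewrite mxE; apply/eqP.
by rewrite -sqrf_eq0 eq_le sqr_ge0 andbT -x0 entry_sqr_le_mip.
Qed.

Lemma frobE m n : @frob R m n = enorm (@mip R m n).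
Proof. by []. Qed.

Lemma frob_ge0 m n (A : 'M[R]_(m, n)) : 0 <= frob A.
Proof. exact: sqrtr_ge0. Qed.

Section Submultiplicativity.
Variables m n p : nat.

Lemma mulmx_entry_mip (A : 'M[R]_(m, n)) (B : 'M[R]_(n, p)) i k :
  (A *m B) i k = mip (row i A) (col k B)^T.
Proof. by rewrite mipE mxE; apply: eq_bigr => j _; rewrite big_ord1 !mxE. Qed.

Lemma mip_sum_rows (A : 'M[R]_(m, n)) : mip A A = \sum_i mip (row i A) (row i A).
Proof.
rewrite mipE exchange_big; apply: eq_bigr => i _; rewrite mipE.
by apply: eq_bigr => j _; rewrite big_ord1 !mxE.
Qed.

Lemma mip_sum_cols (B : 'M[R]_(n, p)) : mip B B = \sum_k mip (col k B)^T (col k B)^T.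
Proof.
rewrite mipE; apply: eq_bigr => k _; rewrite mipE.
by apply: eq_bigr => j _; rewrite big_ord1 !mxE.
Qed.

Lemma frob_mulmx_le (A : 'M[R]_(m, n)) (B : 'M[R]_(n, p)) :
  frob (A *m B) <= frob A * frob B.
Proof.
have ipM k := @inner_product_mip k.
rewrite /frob -sqrtrM ?(ip_ge0 (ipM _ _)) // ler_sqrt; last first.
  by rewrite mulr_ge0 ?(ip_ge0 (ipM _ _)).
rewrite mipE exchange_big /= mip_sum_rows mip_sum_cols mulr_suml.
apply: ler_sum => i _; rewrite mulr_sumr; apply: ler_sum => k _.
by rewrite mulmx_entry_mip -expr2 (ip_sqr_le (ipM _ _)).
Qed.

End Submultiplicativity.
End Frobenius.

(** * The penalty function [G] *)

Section Objective.
Variables (R : realType) (n r : nat) (C : 'M[R]_n) (rho : R).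
Local Notation E := 'M[R]_(n, r).

Lemma pipE : @pip R n r = prod_ip (@mip R n r) (@mip R n r).
Proof. by []. Qed.

Definition G_smooth (p : E * E) : R :=
  mip C (p.1 *m p.1^T) + rho / 2 * frob (p.1 - p.2) ^+ 2.

Definition G_smooth_grad (p : E * E) : E * E :=
  (2%:R *: (C *m p.1) + rho *: (p.1 - p.2), rho *: (p.2 - p.1)).

Lemma G_split p : G C rho p = (row_indic p.1 + (G_smooth p)%:E)%E.
Proof. by rewrite /G addeC EFinD. Qed.

Lemma mip_mulmx_tr (x y : E) : mip C (x *m y^T) = mip (C *m y) x.
Proof. by rewrite /mip mulmxA mxtrace_mulC trmx_mul mulmxA. Qed.

Lemma row_indicE (s : E) :
  row_indic s = if [forall i, unit_sphere (row i s)] then 0%E else +oo%E.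
Proof.
rewrite /row_indic /indic; case: ifP => [/forallP s_M | /negbT].
  by apply: big1 => i _; rewrite s_M.
rewrite negb_forall => /existsP[i /negbTE i_notM]; rewrite (bigD1 i) //= i_notM addye //.
rewrite gt_eqF // (lt_le_trans ltNy0) //.
by apply: sume_ge0 => j _; case: ifP => _; rewrite ?leey.
Qed.

Lemma in_M_row_indic (s : E) : row_indic s \is a fin_num -> in_M s.
Proof. by rewrite row_indicE; case: ifP => [/forallP s_M _ i | _]; [apply/eqP/s_M |]. Qed.

Lemma constrained_criticalE (s : E) :
  constrained_critical C s <->
  limiting_subgrad (@mip R n r) (@row_indic R n r) s (- (2%:R *: (C *m s))).
Proof.
split=> [[_ [w [hw /eqP]]] | hs].
  by rewrite addr_eq0 => /eqP ->; rewrite opprK.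
split; first exact: in_M_row_indic hs.1.
by exists (- (2%:R *: (C *m s))); rewrite subrr.
Qed.

Lemma G_smooth_norm_le d :
  `|G_smooth d| <= (frob C + `|rho|) * enorm (@pip R n r) d ^+ 2.
Proof.
have ipM := @inner_product_mip R n r; have ipP := inner_product_prod ipM ipM.
have := enorm_sqr ipP d; rewrite -pipE; case: d => d1 d2 /= ->.
rewrite /G_smooth /pip /= -!(enorm_sqr ipM) mip_mulmx_tr.
have hC : `|mip (C *m d1) d1| <= frob C * frob d1 ^+ 2.
  rewrite expr2 mulrA; apply: le_trans (ip_norm_le ipM _ _) _.
  by rewrite ler_wpM2r ?enorm_ge0 // frob_mulmx_le.
have hd : frob (d1 - d2) <= frob d1 + frob d2 by rewrite !frobE -(enormN ipM d2) enormD.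
rewrite (le_trans (ler_normD _ _)) // normrM normf_div ger0_norm ?sqr_ge0 // normr_nat.
have := frob_ge0 (d1 - d2); have := frob_ge0 d1; have := frob_ge0 d2.
have := frob_ge0 C; have := normr_ge0 rho; move: hC hd.
rewrite -!frobE; set c := frob C; set f1 := frob d1; set f2 := frob d2; set f := frob _.
move=> hC hd rho0 c0 f20 f10 f0.
have hf : f ^+ 2 <= 2 * (f1 ^+ 2 + f2 ^+ 2).
  have : f ^+ 2 <= (f1 + f2) ^+ 2 by rewrite ler_pXn2r ?nnegrE ?addr_ge0.
  have := sqr_ge0 (f1 - f2); rewrite sqrrB sqrrD; lra.
have : `|rho| / 2 * f ^+ 2 <= `|rho| * (f1 ^+ 2 + f2 ^+ 2).
  apply: le_trans (_ : `|rho| / 2 * (2 * (f1 ^+ 2 + f2 ^+ 2)) <= _).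
    by rewrite ler_wpM2l ?divr_ge0.
  by rewrite mulrA divfK ?pnatr_eq0.
nra.
Qed.

Hypothesis C_sym : C^T = C.

Lemma G_smoothD p d :
  G_smooth (p + d) = G_smooth p + pip (G_smooth_grad p) d + G_smooth d.
Proof.
have ipM := @inner_product_mip R n r.
case: p d => [a b] [da db]; rewrite /G_smooth /G_smooth_grad /pip /= !mip_mulmx_tr.
rewrite !(enorm_sqr ipM) mulmxDr.
have -> : a + da - (b + db) = (a - b) + (da - db) by rewrite opprD addrACA.
rewrite ?(ipDl ipM) ?(ipDr ipM) ?(ipZl ipM) ?(ipZr ipM) ?(ipBl ipM) ?(ipBr ipM).
rewrite ?(ipNl ipM) ?(ipNr ipM) opprK.
have -> : mip (C *m da) a = mip (C *m a) da.
  by rewrite (ipC ipM _ da) /mip trmx_mul -mulmxA C_sym.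
rewrite (ipC ipM b a) (ipC ipM da a) (ipC ipM db a) (ipC ipM da b) (ipC ipM db b).
by rewrite (ipC ipM db da); field.
Qed.

Lemma G_smooth_taylor :
  quadratic_taylor (@pip R n r) G_smooth G_smooth_grad (frob C + `|rho|).
Proof.
move=> p d; rewrite G_smoothD.
have -> : forall a b c : R, a + b + c - a - b = c by move=> *; ring.
exact: G_smooth_norm_le.
Qed.

Lemma G_smooth_gradB p q : G_smooth_grad p - G_smooth_grad q = G_smooth_grad (p - q).
Proof.
case: p q => [a b] [c d]; rewrite /G_smooth_grad !pair_subE /= mulmxBr.
move: (C *m a) (C *m c) => Ca Cc.
by congr (_, _); apply/matrixP => i j; rewrite !mxE; ring.
Qed.

Lemma G_smooth_grad_lipschitz :
  lipschitz_map (@pip R n r) G_smooth_grad (2 * frob C + 4 * `|rho|).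
Proof.
have ipM := @inner_product_mip R n r.
move=> p q; rewrite G_smooth_gradB pipE.
have := enorm_prod_fst ipM ipM (p - q); have := enorm_prod_snd ipM ipM (p - q).
move: (p - q) => [d1 d2] /= h2 h1.
apply: le_trans (enorm_prod_le ipM ipM _) _ => /=; rewrite -!frobE in h1 h2 *.
have hCd : frob (2 *: (C *m d1) + rho *: (d1 - d2))
            <= 2 * (frob C * frob d1) + `|rho| * frob (d1 - d2).
  rewrite !frobE; apply: le_trans (enormD ipM _ _) _.
  rewrite !(enormZ ipM) normr_nat -!frobE.
  by rewrite lerD2r ler_wpM2l ?frob_mulmx_le.
have hd : frob (d1 - d2) <= frob d1 + frob d2 by rewrite !frobE -(enormN ipM d2) enormD.
have -> : frob (rho *: (d2 - d1)) = `|rho| * frob (d1 - d2).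
  by rewrite !frobE (enormZ ipM) (enormB ipM).
have := frob_ge0 C; have := normr_ge0 rho; move: hCd hd h1 h2.
set c := frob C; set f1 := frob d1; set f2 := frob d2; set f := frob (d1 - d2).
set N := enorm _ _; nra.
Qed.

End Objective.

Theorem lemma6 (R : realType) (n r : nat) (C : 'M[R]_n) (rho : R) :
  C^T = C -> 0 < rho ->
  forall st s : 'M[R]_(n, r),
    critical (@pip R n r) (G C rho) (st, s) <->
    (s = st /\ constrained_critical C st).
Proof.
move=> C_sym rho_gt0 st s; have ipM := @inner_product_mip R n r.
rewrite /critical pipE (limiting_subgradDE (inner_product_prod ipM ipM) _ _
  (G_smooth_taylor rho C_sym) (G_smooth_grad_lipschitz C rho) (G_split C rho)).
have -> : 0 - G_smooth_grad C rho (st, s) =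
          (- (2%:R *: (C *m st) + rho *: (st - s)), rho *: (st - s)).
  by rewrite sub0r /G_smooth_grad; congr (_, _); rewrite /= -scalerN opprB.
apply: iff_trans (limiting_subgrad_fst ipM ipM _ _ _ _ _) _.
rewrite constrained_criticalE.
have st_s : rho *: (st - s) = 0 <-> s = st.
  split=> [/eqP | ->]; last by rewrite subrr scaler0.
  by rewrite scaler_eq0 (gt_eqF rho_gt0) subr_eq0 => /eqP.
split=> [[/st_s -> h] | [-> h]]; split=> //; by rewrite ?subrr ?scaler0 ?addr0 in h *.
Qed.
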